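(* Let $\mathcal{F}=\langle\mathbb{A},(\mu_i)_{i\in\mathsf{Ag}}\rangle$ be an APE-structure and $\mathbb{E}=(E,(\sim_i),(P_i),\Phi,\mathsf{pre})$ a probabilistic event structure over $\mathbb{A}$. Then the updated structure $\mathcal{F}^{\mathbb{E}}=(\mathbb{A}^{\mathbb{E}},(\mu^{\mathbb{E}}_i)_{i\in\mathsf{Ag}})$ is an APE-structure.
   Context: Fix a set $\mathsf{Ag}$ of agents. A monadic Heyting algebra is a Heyting algebra $\mathbb{L}$ with, for each $i\in\mathsf{Ag}$, monotone unary operations $\lozenge_i,\Box_i$ such that for all $a,b$: $a\leq\lozenge_i a$; $\Box_i a\leq a$; $\lozenge_i(a\vee b)\leq\lozenge_i a\vee\lozenge_i b$; $\Box_i(a\to b)\leq\Box_i a\to\Box_i b$; $\lozenge_i a\leq\Box_i\lozenge_i a$; $\lozenge_i\Box_i a\leq\Box_i a$; $\Box_i(a\to b)\leq\lozenge_i a\to\lozenge_i b$; $\lozenge_i\bot\leq\bot$; $\top\leq\Box_i\top$. An epistemic Heyting algebra is a finite monadic Heyting algebra with $\lozenge_i a\vee\neg\lozenge_i a=\top$ for all $i,a$. An element $c$ is $i$-minimal if $c\neq\bot$, $\lozenge_i c=c$, and whenever $d<c$ and $\lozenge_i d=d$ then $d=\bot$; $\mathsf{Min}_i(\cdot)$ is the set of $i$-minimal elements. A partial map $\mu:\mathbb{A}\to\mathbb{R}^+$ is an $i$-premeasure if: $\mathsf{dom}(\mu)=\mathsf{Min}_i(\mathbb{A}){\downarrow}$;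 $\mu$ is order-preserving; for $a\in\mathsf{Min}_i(\mathbb{A})$ and $b,c\leq a$, $\mu(b\vee c)=\mu(b)+\mu(c)-\mu(b\wedge c)$; $\mu(\bot)=0$ if $\mathsf{dom}(\mu)\neq\varnothing$. It is an $i$-measure if also: for $a\in\mathsf{Min}_i(\mathbb{A})$ and $b<c\leq a$, $\mu(b)<\mu(c)$; and $\mu(a)=1$ for $a\in\mathsf{Min}_i(\mathbb{A})$. An APE-structure is $\langle\mathbb{A},(\mu_i)\rangle$ with $\mathbb{A}$ an epistemic Heyting algebra and each $\mu_i$ an $i$-measure on $\mathbb{A}$. A pre-ordered multiset on $X$ is a multiset in which the copies $x_1,\dots,x_n$ of an element carry the linear order $x_1\prec\cdots\prec x_n$. A probabilistic event structure over $\mathbb{A}$ is $(E,(\sim_i),(P_i),\Phi,\mathsf{pre})$: $E$ non-empty finite; $\sim_i$ equivalence relations on $E$; $P_i:E\to\,]0,1]$ with $\sum\{P_i(e')\mid e'\sim_i e\}=1$; $\Phi$ a finite pre-ordered multiset on $\mathbb{A}$ such that any $a,b\in\Phi$ arising from distinct elements satisfy $a\wedge b=\bot$ or $a<b$ or $b<a$; $\mathsf{pre}(\bullet\mid a)$ a probability distribution on $E$ for each $a\in\Phi$; and if $\mathsf{pre}(e\mid a)=0$ then $\mathsf{pre}(e\mid b)=0$ for $b\in\Phi$ with $a<b$ (distinct elements) or $a\prec b$ (copies). For $a\in\Phi$: $\mathrm{mb}(a)$ is the set of maximal elements of $\Phi\cap({\downarrow}a\setminus\{a\})$, and $\mu^a_i(x):=\mu_i(x\wedge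 a)-\sum_{b\in\mathrm{mb}(a)}\mu_i(x\wedge b)$ for $x\in\mathsf{Min}_i(\mathbb{A}){\downarrow}$. Intermediate algebra $\mathbb{A}'=\prod_{\mathbb{E}}\mathbb{A}$: all maps $f:E\to\mathbb{A}$ with pointwise Heyting operations, $(\lozenge'_i f)(e)=\bigvee\{\lozenge_i f(e')\mid e'\sim_i e\}$, $(\Box'_i f)(e)=\bigwedge\{\Box_i f(e')\mid e'\sim_i e\}$; and $\mu'_i:\mathsf{Min}_i(\mathbb{A}'){\downarrow}\to\mathbb{R}^+$, $\mu'_i(f)=\sum_{e\in E}\sum_{a\in\Phi}P_i(e)\mu^a_i(f(e))\mathsf{pre}(e\mid a)$. Define $\overline{\mathsf{pre}}\in\mathbb{A}'$ by $\overline{\mathsf{pre}}(e)=\bigvee\{a\in\Phi\mid\mathsf{pre}(e\mid a)\neq0\}$. For an epistemic Heyting algebra $\mathbb{B}$ and $c\in\mathbb{B}$, the pseudo-quotient $\mathbb{B}^c$ has carrier the quotient Heyting algebra by $x\cong_c y\iff x\wedge c=y\wedge c$ (classes $[x]$, $[x]\leq[y]$ iff $x\wedge c\leq y\wedge c$), with $\lozenge^c_i[x]=[\lozenge_i(x\wedge c)]$ and $\Box^c_i[x]=[\Box_i(c\to x)]$. Set $\mathbb{A}^{\mathbb{E}}:=(\mathbb{A}')^{\overline{\mathsf{pre}}}$. The updated structure is $\mathcal{F}^{\mathbb{E}}=(\mathbb{A}^{\mathbb{E}},(\mu^{\mathbb{E}}_i))$ with $\mu^{\mathbb{E}}_i:\mathsf{Min}_i(\mathbb{A}^{\mathbb{E}}){\downarrow}\to[0,1]$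 given by $\mu^{\mathbb{E}}_i([g])=0$ if $[g]=\bot$ and otherwise $\mu^{\mathbb{E}}_i([g])=\mu'_i(g)/\mu'_i(f)$, where $[f]$ is the only element of $\mathsf{Min}_i(\mathbb{A}^{\mathbb{E}})$ with $[g]\leq[f]$. *)

From HB Require Import structures.
From mathcomp Require Import all_boot all_order all_algebra.
From mathcomp Require Import reals.
Set Implicit Arguments.
Unset Strict Implicit.
Unset Printing Implicit Defensive.
Import Order.TTheory GRing.Theory Num.Theory.
Local Open Scope ring_scope.

Section Algebras.
Variable Ag : Type.

Record hops (T : Type) := HOps {
  hmeet : T -> T -> T;
  hjoin : T -> T -> T;
  himp  : T -> T -> T;
  hbot  : T;
  htop  : T;
  hdia  : Ag -> T -> T;
  hbox  : Ag -> T -> T }.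

Section Ops.
Variables (T : eqType) (o : hops T).

Definition hle (x y : T) : bool := hmeet o x y == x.
Definition hlt (x y : T) : bool := hle x y && (x != y).
Definition hneg (x : T) : T := himp o x (hbot o).

Definition is_heyting : Prop :=
  associative (hmeet o) /\ commutative (hmeet o) /\
  associative (hjoin o) /\ commutative (hjoin o) /\
  (forall x y, hmeet o x (hjoin o x y) = x) /\
  (forall x y, hjoin o x (hmeet o x y) = x) /\
  (forall x, hmeet o x (htop o) = x) /\
  (forall x, hjoin o x (hbot o) = x) /\
  (forall x y z, hle (hmeet o x y) z = hle x (himp o y z)).

Definition monadic_ax (i : Ag) : Prop :=
  (forall a b, hle a b -> hle (hdia o i a) (hdia o i b)) /\
  (forall a b, hle a b -> hle (hbox o i a) (hbox o i b)) /\
  (forall a, hle a (hdia o i a)) /\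
  (forall a, hle (hbox o i a) a) /\
  (forall a b, hle (hdia o i (hjoin o a b)) (hjoin o (hdia o i a) (hdia o i b))) /\
  (forall a b, hle (hbox o i (himp o a b)) (himp o (hbox o i a) (hbox o i b))) /\
  (forall a, hle (hdia o i a) (hbox o i (hdia o i a))) /\
  (forall a, hle (hdia o i (hbox o i a)) (hbox o i a)) /\
  (forall a b, hle (hbox o i (himp o a b)) (himp o (hdia o i a) (hdia o i b))) /\
  hle (hdia o i (hbot o)) (hbot o) /\
  hle (htop o) (hbox o i (htop o)).

Definition is_monadic : Prop := is_heyting /\ forall i, monadic_ax i.
End Ops.

Section Finite.
Variables (T : finType) (o : hops T).

Definition is_epistemic : Prop :=
  is_monadic o /\ forall i a, hjoin o (hdia o i a) (hneg o (hdia o i a)) = htop o.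

Definition is_minimal (i : Ag) (c : T) : bool :=
  [&& c != hbot o, hdia o i c == c &
      [forall d, (hlt o d c && (hdia o i d == d)) ==> (d == hbot o)]].

Definition in_dom (i : Ag) (x : T) : bool :=
  [exists a, is_minimal i a && hle o x a].

Variable R : realType.

(* A partial map with domain Min_i(A)↓ is represented by a total function
   T -> R whose values outside Min_i(A)↓ are irrelevant. *)
Definition is_premeasure (i : Ag) (mu : T -> R) : Prop :=
  (forall x, in_dom i x -> 0 <= mu x) /\
  (forall x y, in_dom i x -> in_dom i y -> hle o x y -> mu x <= mu y) /\
  (forall a b c, is_minimal i a -> hle o b a -> hle o c a ->
     mu (hjoin o b c) = mu b + mu c - mu (hmeet o b c)) /\
  ((exists x, in_dom i x) -> mu (hbot o) = 0).

Definition is_measure (i : Ag) (mu : T -> R) : Prop :=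
  is_premeasure i mu /\
  (forall a b c, is_minimal i a -> hlt o b c -> hle o c a -> mu b < mu c) /\
  (forall a, is_minimal i a -> mu a = 1).

Definition is_APE (mu : Ag -> T -> R) : Prop :=
  is_epistemic /\ forall i, is_measure i (mu i).
End Finite.

(** Pseudo-quotient B^c.  The quotient B/≅_c is represented by the set of
    canonical representatives x /\ c (the image of x |-> x /\ c);
    [x] is  qproj x := x /\ c. *)
Section Quot.
Variables (T : finType) (o : hops T) (c : T).

Definition qrep : pred T := fun y => y \in codom (fun x => hmeet o x c).
Definition qtype := {y : T | qrep y}.
Definition qproj (x : T) : qtype := exist qrep (hmeet o x c) (codom_f _ x).

Definition qops : hops qtype := HOps
  (fun p q => qproj (hmeet o (val p) (val q)))
  (fun p q => qproj (hjoin o (val p) (val q)))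
  (fun p q => qproj (himp o (val p) (val q)))
  (qproj (hbot o))
  (qproj (htop o))
  (fun i p => qproj (hdia o i (hmeet o (val p) c)))
  (fun i p => qproj (hbox o i (himp o c (val p)))).

Variable R : realType.
Definition qmu (mu' : Ag -> T -> R) (i : Ag) (p : qtype) : R :=
  if p == qproj (hbot o) then 0 else
  if [pick f | is_minimal qops i f && hle qops p f] is Some f
  then mu' i (val p) / mu' i (val f) else 0.
End Quot.

Section Event.
Variables (R : realType) (A : finType) (o : hops A) (E : finType)
  (sim : Ag -> rel E) (P : Ag -> E -> R) (phi : seq A)
  (pre : 'I_(size phi) -> E -> R).

(* Phi is a pre-ordered multiset given by the sequence phi: its members are
   the positions a : 'I_(size phi), labelled by lab a; copies of the same
   element are linearly ordered by position. *)
Definition lab (a : 'I_(size phi)) : A := nth (hbot o) phi a.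

Definition phi_lt (a b : 'I_(size phi)) : bool :=
  ((lab a != lab b) && hlt o (lab a) (lab b)) ||
  ((lab a == lab b) && (val a < val b)%N).

Definition is_pes : Prop :=
  (0 < #|E|)%N /\
  (forall i, (forall e, sim i e e) /\ (forall e e', sim i e e' -> sim i e' e) /\
             (forall e1 e2 e3, sim i e1 e2 -> sim i e2 e3 -> sim i e1 e3)) /\
  (forall i e, 0 < P i e <= 1) /\
  (forall i e, \sum_(e' | sim i e' e) P i e' = 1) /\
  (forall a b, lab a != lab b ->
     hmeet o (lab a) (lab b) = hbot o \/ hlt o (lab a) (lab b) \/ hlt o (lab b) (lab a)) /\
  (forall a e, 0 <= pre a e) /\
  (forall a, \sum_e pre a e = 1) /\
  (forall a b e, pre a e = 0 -> phi_lt a b -> pre b e = 0).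

Definition mb (a : 'I_(size phi)) : {set 'I_(size phi)} :=
  [set b | phi_lt b a & [forall c, ~~ (phi_lt b c && phi_lt c a)]].

Definition mu_at (mu : Ag -> A -> R) (i : Ag) (a : 'I_(size phi)) (x : A) : R :=
  mu i (hmeet o x (lab a)) - \sum_(b in mb a) mu i (hmeet o x (lab b)).

Definition pops : hops {ffun E -> A} := @HOps {ffun E -> A}
  (fun f g : {ffun E -> A} => [ffun e => hmeet o (f e) (g e)])
  (fun f g : {ffun E -> A} => [ffun e => hjoin o (f e) (g e)])
  (fun f g : {ffun E -> A} => [ffun e => himp o (f e) (g e)])
  [ffun _ => hbot o]
  [ffun _ => htop o]
  (fun i (f : {ffun E -> A}) => [ffun e => \big[hjoin o/hbot o]_(e' | sim i e' e) hdia o i (f e')])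
  (fun i (f : {ffun E -> A}) => [ffun e => \big[hmeet o/htop o]_(e' | sim i e' e) hbox o i (f e')]).

Definition pmu (mu : Ag -> A -> R) (i : Ag) (f : {ffun E -> A}) : R :=
  \sum_(e : E) \sum_(a < size phi) P i e * mu_at mu i a (f e) * pre a e.

Definition prebar : {ffun E -> A} :=
  [ffun e => \big[hjoin o/hbot o]_(a < size phi | pre a e != 0) lab a].

Definition upd_ops := qops pops prebar.
Definition upd_mu (mu : Ag -> A -> R) := @qmu _ pops prebar R (pmu mu).
End Event.
End Algebras.

(* Both constructions preserve epistemic Heyting algebras: the product of
   copies of A indexed by E, with diamond and box computed over ~_i-classes,
   and any pseudo-quotient B^c, whose classes are represented by the elements
   below c.  In the updated algebra an i-minimal element lives on a single
   ~_i-class, where it equals m /\ pre-bar for an i-minimal m of A, so every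
   element below it is pointwise below m.  There mu' is a positive combination
   of the maps x |-> mu_i(x /\ a) - mu_i(x /\ \/ mb(a)), which are monotone and
   modular because the members of mb(a) are pairwise disjoint.  Strictness:
   if x < y then, at some event e, x(e) and y(e) differ on a ≺-minimal a with
   pre(e|a) <> 0; every b in mb(a) then has pre(e|b) <> 0 too, so x(e) and
   y(e) agree on it.  Dividing by mu'(f) > 0 for the minimal f above gives
   an i-measure. *)

From HB Require Import structures.
From mathcomp Require Import all_boot all_order all_algebra.
From mathcomp Require Import reals lra.
Set Implicit Arguments.
Unset Strict Implicit.
Unset Printing Implicit Defensive.
Import Order.TTheory GRing.Theory Num.Theory.
Local Open Scope ring_scope.

Definition equivalence_family (Ag E : Type) (sim : Ag -> rel E) : Prop :=
  forall i, (forall e, sim i e e) /\ (forall e e', sim i e e' -> sim i e' e) /\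
    (forall e1 e2 e3, sim i e1 e2 -> sim i e2 e3 -> sim i e1 e3).

Lemma exists_lt_minimal (T : finType) (lt : rel T) (S : pred T) a :
  irreflexive lt -> transitive lt -> S a ->
  exists2 a0, S a0 & forall b, lt b a0 -> ~~ S b.
Proof.
move=> lt_irr lt_trans Sa.
case: (arg_minnP (fun b => #|[pred c | lt c b]|) Sa) => a0 Sa0 a0_min.
exists a0 => // b lt_ba0; apply/negP => /a0_min; apply/negP; rewrite -ltnNge.
apply: proper_card; apply/properP; split.
  by apply/subsetP => c; rewrite !inE => /lt_trans; apply.
by exists b; rewrite !inE ?lt_irr.
Qed.

Section Heyting.
Variables (Ag : Type) (T : eqType) (o : hops Ag T).
Hypothesis Hh : is_heyting o.

Local Notation "x ⊓ y" := (hmeet o x y) (at level 40, left associativity).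
Local Notation "x ⊔ y" := (hjoin o x y) (at level 45, left associativity).
Local Notation "x ≤ y" := (hle o x y) (at level 70).
Local Notation "⊥" := (hbot o).
Local Notation "⊤" := (htop o).
Local Notation "x ⇒ y" := (himp o x y) (at level 55, right associativity).

Lemma hmeetA : associative (hmeet o). Proof. by case: Hh. Qed.
Lemma hmeetC : commutative (hmeet o). Proof. by case: Hh => _ []. Qed.
Lemma hjoinA : associative (hjoin o). Proof. by case: Hh => _ [] _ []. Qed.
Lemma hjoinC : commutative (hjoin o). Proof. by case: Hh => _ [] _ [] _ []. Qed.
Lemma hmeetKU x y : x ⊓ (x ⊔ y) = x.
Proof. by case: Hh => _ [] _ [] _ [] _ []. Qed.
Lemma hjoinKI x y : x ⊔ (x ⊓ y) = x.
Proof. by case: Hh => _ [] _ [] _ [] _ [] _ []. Qed.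
Lemma hmeetx1 x : x ⊓ ⊤ = x.
Proof. by case: Hh => _ [] _ [] _ [] _ [] _ [] _ []. Qed.
Lemma hjoinx0 x : x ⊔ ⊥ = x.
Proof. by case: Hh => _ [] _ [] _ [] _ [] _ [] _ [] _ []. Qed.
Lemma hle_imp x y z : (x ≤ y ⇒ z) = (x ⊓ y ≤ z).
Proof. by case: Hh => _ [] _ [] _ [] _ [] _ [] _ [] _ [] _ ->. Qed.

Lemma hmeetxx x : x ⊓ x = x.
Proof. by have := hmeetKU x (x ⊓ x); rewrite hjoinKI. Qed.

Lemma hmeet_idPl x y : x ≤ y -> x ⊓ y = x. Proof. exact: eqP. Qed.

Lemma hle_refl x : x ≤ x. Proof. exact/eqP/hmeetxx. Qed.
Lemma hle_trans y x z : x ≤ y -> y ≤ z -> x ≤ z.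
Proof. by move=> /eqP xy /eqP yz; apply/eqP; rewrite -xy -hmeetA yz. Qed.
Lemma hle_anti x y : x ≤ y -> y ≤ x -> x = y.
Proof. by move=> /eqP xy /eqP yx; rewrite -xy -{2}yx hmeetC. Qed.
Lemma hleIl x y : x ⊓ y ≤ x.
Proof. by apply/eqP; rewrite (hmeetC x y) -hmeetA hmeetxx hmeetC. Qed.
Lemma hleIr x y : x ⊓ y ≤ y.
Proof. by apply/eqP; rewrite -hmeetA hmeetxx. Qed.
Lemma hlexI z x y : z ≤ x -> z ≤ y -> z ≤ x ⊓ y.
Proof. by move=> /eqP zx /eqP zy; apply/eqP; rewrite hmeetA zx zy. Qed.
Lemma hleUl x y : x ≤ x ⊔ y. Proof. exact/eqP/hmeetKU. Qed.
Lemma hleUr x y : y ≤ x ⊔ y. Proof. by rewrite hjoinC; apply: hleUl. Qed.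
Lemma hleUx z x y : x ≤ z -> y ≤ z -> x ⊔ y ≤ z.
Proof.
have joinE u v : u ≤ v -> u ⊔ v = v by move=> /eqP <-; rewrite hjoinC hmeetC hjoinKI.
move=> /joinE xz /joinE yz; have xyz : x ⊔ y ⊔ z = z by rewrite -hjoinA yz xz.
by apply/eqP; rewrite -xyz hmeetKU.
Qed.
Lemma hle0x x : ⊥ ≤ x.
Proof. by apply/eqP; have := hmeetKU ⊥ x; rewrite hjoinC hjoinx0. Qed.
Lemma hlex1 x : x ≤ ⊤. Proof. exact/eqP/hmeetx1. Qed.
Lemma hlex0 x : x ≤ ⊥ -> x = ⊥. Proof. by move/hle_anti; apply; apply: hle0x. Qed.

Lemma hlt_irr : irreflexive (hlt o). Proof. by move=> x; rewrite /hlt eqxx andbF. Qed.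
Lemma hlt_trans : transitive (hlt o).
Proof.
move=> y x z /andP[xy x'y] /andP[yz y'z]; rewrite /hlt (hle_trans xy yz) /=.
by apply: contraNneq x'y => xz; apply/eqP/(hle_anti xy); rewrite xz.
Qed.

Lemma hleIxl x y z : x ≤ z -> x ⊓ y ≤ z. Proof. exact/hle_trans/hleIl. Qed.
Lemma hleIxr x y z : y ≤ z -> x ⊓ y ≤ z. Proof. exact/hle_trans/hleIr. Qed.
Lemma hlexUl x y z : z ≤ x -> z ≤ x ⊔ y. Proof. by move/hle_trans; apply; apply: hleUl. Qed.
Lemma hlexUr x y z : z ≤ y -> z ≤ x ⊔ y. Proof. by move/hle_trans; apply; apply: hleUr. Qed.
Lemma hleI2 x x' y y' : x ≤ x' -> y ≤ y' -> x ⊓ y ≤ x' ⊓ y'.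
Proof. by move=> xx' yy'; apply: hlexI; [apply: hleIxl | apply: hleIxr]. Qed.
Lemma hleU2 x x' y y' : x ≤ x' -> y ≤ y' -> x ⊔ y ≤ x' ⊔ y'.
Proof. by move=> xx' yy'; apply: hleUx; [apply: hlexUl | apply: hlexUr]. Qed.

Lemma hmeet_impr x y : x ⊓ (x ⇒ y) ≤ y.
Proof. by rewrite hmeetC -hle_imp hle_refl. Qed.
Lemma hle_mp a y z : a ≤ y -> a ≤ y ⇒ z -> a ≤ z.
Proof. by move=> ay ayz; apply: hle_trans (hmeet_impr y z); apply: hlexI. Qed.
Lemma himp_mono x y y' : y ≤ y' -> x ⇒ y ≤ x ⇒ y'.
Proof. by move=> yy'; rewrite hle_imp hmeetC; apply: hle_trans (hmeet_impr _ _) yy'. Qed.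
Lemma himp_anti x x' y : x' ≤ x -> x ⇒ y ≤ x' ⇒ y.
Proof.
move=> x'x; rewrite hle_imp hmeetC; apply: hle_trans (hmeet_impr x y).
exact: hleI2 (hle_refl _).
Qed.

Lemma himp_distr x y z : x ⇒ (y ⇒ z) ≤ (x ⇒ y) ⇒ (x ⇒ z).
Proof.
rewrite !hle_imp; have wx : (x ⇒ (y ⇒ z)) ⊓ (x ⇒ y) ⊓ x ≤ x by apply: hleIr.
apply: (hle_mp (y := y)); apply: (hle_mp wx); first exact/hleIxl/hleIr.
exact/hleIxl/hleIxl/hle_refl.
Qed.

Lemma hmeetUr x y z : x ⊓ (y ⊔ z) = (x ⊓ y) ⊔ (x ⊓ z).
Proof.
apply: hle_anti; last by apply: hleUx; apply: hleI2 (hle_refl _) _; [apply: hleUl | apply: hleUr].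
rewrite hmeetC -hle_imp; apply: hleUx; rewrite hle_imp hmeetC; [exact: hleUl | exact: hleUr].
Qed.

Lemma hjoins_le_seq (I : eqType) (r : seq I) F z :
  (forall i, i \in r -> F i ≤ z) -> \big[hjoin o/⊥]_(i <- r) F i ≤ z.
Proof.
rewrite big_seq => Fz; apply: (big_ind (fun v => v ≤ z)) => //; first exact: hle0x.
exact: hleUx.
Qed.
Lemma hjoins_le (I : finType) (P : pred I) F z :
  (forall i, P i -> F i ≤ z) -> \big[hjoin o/⊥]_(i | P i) F i ≤ z.
Proof.
move=> Fz; apply: (big_ind (fun v => v ≤ z)) => //; first exact: hle0x.
exact: hleUx.
Qed.
Lemma hle_joins (I : finType) (P : pred I) F i0 :
  P i0 -> F i0 ≤ \big[hjoin o/⊥]_(i | P i) F i.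
Proof.
move=> Pi0; elim: (index_enum I) (mem_index_enum i0) => // j r IH.
rewrite inE big_cons => /orP[/eqP <-|/IH]; first by rewrite Pi0; apply: hleUl.
by case: (P j) => // ?; apply: hlexUr.
Qed.
Lemma hle_meets (I : finType) (P : pred I) F z :
  (forall i, P i -> z ≤ F i) -> z ≤ \big[hmeet o/⊤]_(i | P i) F i.
Proof.
move=> zF; apply: (big_ind (fun v => z ≤ v)) => //; first exact: hlex1.
by move=> *; apply: hlexI.
Qed.
Lemma hmeets_le (I : finType) (P : pred I) F i0 :
  P i0 -> \big[hmeet o/⊤]_(i | P i) F i ≤ F i0.
Proof.
move=> Pi0; elim: (index_enum I) (mem_index_enum i0) => // j r IH.
rewrite inE big_cons => /orP[/eqP <-|/IH]; first by rewrite Pi0; apply: hleIl.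
by case: (P j) => // ?; apply: hleIxr.
Qed.
Lemma hmeet_joins (I : finType) (P : pred I) F z :
  z ⊓ \big[hjoin o/⊥]_(i | P i) F i ≤ \big[hjoin o/⊥]_(i | P i) (z ⊓ F i).
Proof.
rewrite hmeetC -hle_imp; apply: hjoins_le => j Pj; rewrite hle_imp hmeetC.
exact: (hle_joins (fun k => z ⊓ F k) Pj).
Qed.

End Heyting.

Ltac happ L := match goal with
  | |- is_true (hle ?o _ _) =>
      match goal with H : is_heyting o |- _ => apply: (@L _ _ o H) end
  end.
Ltac hlat_rec n :=
  match n with
  | O => fail
  | S ?m => first
     [ happ hle_refl | assumption | happ hle0x | happ hlex1
     | (happ hlexI; [hlat_rec n | hlat_rec n])
     | (happ hleUx; [hlat_rec n | hlat_rec n])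
     | (happ hleIxl; hlat_rec m) | (happ hleIxr; hlat_rec m)
     | (happ hlexUl; hlat_rec m) | (happ hlexUr; hlat_rec m) ]
  end.
Ltac hlat := hlat_rec 6%N.
Ltac hlatE := match goal with |- _ = _ =>
  match goal with H : is_heyting ?o |- _ => apply: (@hle_anti _ _ o H); hlat end end.

Section Monadic.
Variables (Ag : Type) (T : eqType) (o : hops Ag T).
Hypothesis Hm : is_monadic o.
Let Hh : is_heyting o := Hm.1.

Local Notation "x ⊓ y" := (hmeet o x y) (at level 40, left associativity).
Local Notation "x ⊔ y" := (hjoin o x y) (at level 45, left associativity).
Local Notation "x ≤ y" := (hle o x y) (at level 70).
Local Notation "⊥" := (hbot o).
Local Notation "⊤" := (htop o).
Local Notation "x ⇒ y" := (himp o x y) (at level 55, right associativity).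
Local Notation "◇" := (hdia o).
Local Notation "□" := (hbox o).

Lemma hdia_mono i a b : a ≤ b -> ◇ i a ≤ ◇ i b.
Proof. by case: (Hm.2 i) => H _; apply: H. Qed.
Lemma hbox_mono i a b : a ≤ b -> □ i a ≤ □ i b.
Proof. by case: (Hm.2 i) => _ [H _]; apply: H. Qed.
Lemma hle_dia i a : a ≤ ◇ i a.
Proof. by case: (Hm.2 i) => _ [_ [H _]]. Qed.
Lemma hbox_le i a : □ i a ≤ a.
Proof. by case: (Hm.2 i) => _ [_ [_ [H _]]]. Qed.
Lemma hdiaU_le i a b : ◇ i (a ⊔ b) ≤ ◇ i a ⊔ ◇ i b.
Proof. by case: (Hm.2 i) => _ [_ [_ [_ [H _]]]]. Qed.
Lemma hbox_imp i a b : □ i (a ⇒ b) ≤ □ i a ⇒ □ i b.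
Proof. by case: (Hm.2 i) => _ [_ [_ [_ [_ [H _]]]]]. Qed.
Lemma hdia_le_box i a : ◇ i a ≤ □ i (◇ i a).
Proof. by case: (Hm.2 i) => _ [_ [_ [_ [_ [_ [H _]]]]]]. Qed.
Lemma hdia_box_le i a : ◇ i (□ i a) ≤ □ i a.
Proof. by case: (Hm.2 i) => _ [_ [_ [_ [_ [_ [_ [H _]]]]]]]. Qed.
Lemma hbox_imp_dia i a b : □ i (a ⇒ b) ≤ ◇ i a ⇒ ◇ i b.
Proof. by case: (Hm.2 i) => _ [_ [_ [_ [_ [_ [_ [_ [H _]]]]]]]]. Qed.
Lemma hdia0 i : ◇ i ⊥ = ⊥.
Proof. by case: (Hm.2 i) => _ [_ [_ [_ [_ [_ [_ [_ [_ [/(hlex0 Hh) H _]]]]]]]]]. Qed.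
Lemma hbox1 i : □ i ⊤ = ⊤.
Proof.
case: (Hm.2 i) => _ [_ [_ [_ [_ [_ [_ [_ [_ [_ H]]]]]]]]].
exact: hle_anti (hlex1 Hh _) H.
Qed.

Lemma hdia_id i a : ◇ i (◇ i a) = ◇ i a.
Proof.
apply: (hle_anti Hh) (hle_dia _ _).
apply: (hle_trans Hh) (hbox_le i (◇ i a)).
apply: (hle_trans Hh) (hdia_box_le i (◇ i a)).
exact/hdia_mono/hdia_le_box.
Qed.
Lemma hdiaU i a b : ◇ i (a ⊔ b) = ◇ i a ⊔ ◇ i b.
Proof.
apply: (hle_anti Hh) (hdiaU_le _ _ _) _.
by apply: (hleUx Hh); apply: hdia_mono; [apply: hleUl | apply: hleUr].
Qed.

Lemma hdia_fixedI i u v : ◇ i u = u -> ◇ i v = v -> ◇ i (u ⊓ v) = u ⊓ v.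
Proof.
move=> Hu Hv; apply: (hle_anti Hh) _ (hle_dia _ _).
by rewrite -{2}Hu -{2}Hv; apply: (hlexI Hh); apply: hdia_mono; hlat.
Qed.
Lemma hdia_fixed_le_box i v : ◇ i v = v -> v ≤ □ i v.
Proof. by move=> Hv; rewrite -{1}Hv -{2}Hv; apply: hdia_le_box. Qed.
Lemma hdia_fixed_neg i v : ◇ i v = v -> ◇ i (hneg o v) = hneg o v.
Proof.
move=> Hv; apply: (hle_anti Hh) _ (hle_dia _ _).
rewrite /hneg (hle_imp Hh) (hmeetC Hh) -(hle_imp Hh) -{2}(hdia0 i).
apply: (hle_trans Hh) (hbox_imp_dia i (hneg o v) ⊥).
apply: (hle_trans Hh) (hdia_fixed_le_box Hv) _; apply: hbox_mono.
by rewrite (hle_imp Hh); apply: hmeet_impr.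
Qed.
Lemma hdia_fixed_joins i I (r : seq I) (P : pred I) F :
  (forall j, P j -> ◇ i (F j) = F j) ->
  ◇ i (\big[hjoin o/⊥]_(j <- r | P j) F j) = \big[hjoin o/⊥]_(j <- r | P j) F j.
Proof.
move=> HF; elim: r => [|j r IH]; first by rewrite !big_nil hdia0.
by rewrite !big_cons; case: ifP => // /HF Fj; rewrite hdiaU Fj IH.
Qed.
End Monadic.

Section Minimal.
Variables (Ag : Type) (T : finType) (o : hops Ag T).
Hypothesis Hm : is_monadic o.
Let Hh : is_heyting o := Hm.1.

Local Notation "x ⊓ y" := (hmeet o x y) (at level 40, left associativity).
Local Notation "x ≤ y" := (hle o x y) (at level 70).
Local Notation "⊥" := (hbot o).
Local Notation "◇" := (hdia o).

Section OneMinimal.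
Variables (i : Ag) (m : T).
Hypothesis m_min : is_minimal o i m.

Lemma minimal_neq0 : m != ⊥. Proof. by case/and3P: m_min. Qed.
Lemma minimal_fixed : ◇ i m = m. Proof. by case/and3P: m_min => _ /eqP. Qed.
Lemma minimal_eq d : d ≤ m -> ◇ i d = d -> d != ⊥ -> d = m.
Proof.
case/and3P: m_min => _ _ /forallP/(_ d) + dm d_fixed d0.
by rewrite /hlt dm d_fixed eqxx (negbTE d0) andbT implybF negbK => /eqP.
Qed.

Lemma minimal_diaI x : m ⊓ x != ⊥ -> ◇ i (m ⊓ x) = m.
Proof.
move=> mx0; apply: minimal_eq; last 1 first.
- by apply: contraNneq mx0 => mx0; apply/eqP/(hlex0 Hh); rewrite -mx0 (hle_dia Hm).
- by rewrite -{2}minimal_fixed; apply/(hdia_mono Hm)/hleIl.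
- exact: hdia_id.
Qed.

Lemma minimal_le_dia x : m ⊓ x != ⊥ -> m ≤ ◇ i x.
Proof. by move/minimal_diaI <-; apply/(hdia_mono Hm)/hleIr. Qed.
End OneMinimal.

Lemma minimal_unique i m1 m2 p : is_minimal o i m1 -> is_minimal o i m2 ->
  p != ⊥ -> p ≤ m1 -> p ≤ m2 -> m1 = m2.
Proof.
move=> m1_min m2_min p0 pm1 pm2.
have m12_fixed := hdia_fixedI Hm (minimal_fixed m1_min) (minimal_fixed m2_min).
have m12_0 : m1 ⊓ m2 != ⊥.
  by apply: contraNneq p0 => m12_0; apply/eqP/(hlex0 Hh); rewrite -m12_0 (hlexI Hh).
rewrite -(minimal_eq m1_min (hleIl Hh _ _) m12_fixed m12_0).
exact: (minimal_eq m2_min (hleIr Hh _ _) m12_fixed m12_0).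
Qed.

(* Take a fixed v meeting x that is minimal among such elements.  A fixed d < v
   disjoint from x cannot be nonzero, since then v /\ ~d would be a smaller one. *)
Lemma minimal_meet_exists i x : x != ⊥ -> exists2 m, is_minimal o i m & m ⊓ x != ⊥.
Proof.
move=> x0; pose S v := (◇ i v == v) && (v ⊓ x != ⊥).
have S_dia : S (◇ i x).
  by rewrite /S hdia_id // eqxx (hmeetC Hh) (hmeet_idPl (hle_dia Hm _ _)).
have [v /andP[/eqP v_fixed vx0] v_min] :=
  exists_lt_minimal (@hlt_irr _ _ o) (hlt_trans Hh) S_dia.
exists v => //; apply/and3P; split; [|by rewrite v_fixed|].
  by apply: contraNneq vx0 => ->; apply/eqP; hlatE.
apply/forallP => d; apply/implyP => /andP[dv /eqP d_fixed].
have dx0 : d ⊓ x = ⊥.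
  by move: (v_min d); rewrite /S d_fixed eqxx /= negbK => /(_ _)/eqP; apply.
set v' := v ⊓ hneg o d.
have v'v : v' = v.
  apply/eqP/negPn/negP => v'v.
  have lt_v'v : hlt o v' v by rewrite /hlt v'v (hleIl Hh).
  apply: (negP (v_min v' lt_v'v)).
  rewrite /S hdia_fixedI ?hdia_fixed_neg // eqxx /=.
  apply: contraNneq vx0 => v'x0; apply/eqP/(hlex0 Hh); rewrite -v'x0.
  apply: (hlexI Hh); last by hlat.
  apply: (hlexI Hh); first by hlat.
  by rewrite /hneg (hle_imp Hh) -dx0; hlat.
have : d ≤ hneg o d.
  by case/andP: dv => dv _; rewrite -v'v in dv; apply: (hle_trans Hh) dv (hleIr Hh _ _).
by rewrite /hneg (hle_imp Hh) (hmeetxx Hh) => /(hlex0 Hh) ->.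
Qed.
End Minimal.

Section Product.
Variables (Ag : Type) (A : finType) (o : hops Ag A) (E : finType) (sim : Ag -> rel E).
Hypothesis sim_equiv : equivalence_family sim.
Hypothesis Hm : is_monadic o.
Let Hh : is_heyting o := Hm.1.

Local Notation "x ⊓ y" := (hmeet o x y) (at level 40, left associativity).
Local Notation "x ⊔ y" := (hjoin o x y) (at level 45, left associativity).
Local Notation "x ≤ y" := (hle o x y) (at level 70).
Local Notation "⊥" := (hbot o).
Local Notation "⊤" := (htop o).
Local Notation "x ⇒ y" := (himp o x y) (at level 55, right associativity).
Local Notation "◇" := (hdia o).
Local Notation "□" := (hbox o).
Local Notation po := (pops o sim).

Lemma sim_refl i e : sim i e e. Proof. by have [refl _] := sim_equiv i. Qed.
Lemma sim_sym i e e' : sim i e e' -> sim i e' e.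
Proof. by have [_ [symm _]] := sim_equiv i; apply: symm. Qed.
Lemma sim_trans i e1 e2 e3 : sim i e1 e2 -> sim i e2 e3 -> sim i e1 e3.
Proof. by have [_ [_ trans]] := sim_equiv i; apply: trans. Qed.

Lemma sim_class i e e' : sim i e e' -> sim i ^~ e =1 sim i ^~ e'.
Proof.
by move=> ee' x; apply/idP/idP => xe; [apply: sim_trans xe ee' | apply: sim_trans xe (sim_sym ee')].
Qed.

Lemma pmeetE (f g : {ffun E -> A}) e : hmeet po f g e = f e ⊓ g e.
Proof. by rewrite ffunE. Qed.
Lemma pjoinE (f g : {ffun E -> A}) e : hjoin po f g e = f e ⊔ g e.
Proof. by rewrite ffunE. Qed.
Lemma pimpE (f g : {ffun E -> A}) e : himp po f g e = f e ⇒ g e.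
Proof. by rewrite ffunE. Qed.
Lemma pbotE e : hbot po e = ⊥. Proof. by rewrite ffunE. Qed.
Lemma ptopE e : htop po e = ⊤. Proof. by rewrite ffunE. Qed.
Lemma pdiaE i (f : {ffun E -> A}) e :
  hdia po i f e = \big[hjoin o/⊥]_(e' | sim i e' e) ◇ i (f e').
Proof. by rewrite ffunE. Qed.
Lemma pboxE i (f : {ffun E -> A}) e :
  hbox po i f e = \big[hmeet o/⊤]_(e' | sim i e' e) □ i (f e').
Proof. by rewrite ffunE. Qed.

Lemma pleP (f g : {ffun E -> A}) : reflect (forall e, f e ≤ g e) (hle po f g).
Proof.
apply: (iffP eqP) => [fg e | fg]; last by apply/ffunP => e; rewrite pmeetE; apply/eqP/fg.
by apply/eqP; rewrite -pmeetE fg.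
Qed.

Lemma pdia_fixed i (f : {ffun E -> A}) e : ◇ i (hdia po i f e) = hdia po i f e.
Proof. by rewrite pdiaE; apply: (hdia_fixed_joins Hm) => j _; apply: hdia_id. Qed.
Lemma pdia_class i (f : {ffun E -> A}) e e' :
  sim i e e' -> hdia po i f e = hdia po i f e'.
Proof. by move=> ee'; rewrite !pdiaE; apply: eq_bigl; apply: sim_class. Qed.
Lemma pbox_class i (f : {ffun E -> A}) e e' :
  sim i e e' -> hbox po i f e = hbox po i f e'.
Proof. by move=> ee'; rewrite !pboxE; apply: eq_bigl; apply: sim_class. Qed.

Lemma pops_heyting : is_heyting po.
Proof.
split; first by move=> f g h; apply/ffunP => e; rewrite !ffunE (hmeetA Hh).
split; first by move=> f g; apply/ffunP => e; rewrite !ffunE (hmeetC Hh).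
split; first by move=> f g h; apply/ffunP => e; rewrite !ffunE (hjoinA Hh).
split; first by move=> f g; apply/ffunP => e; rewrite !ffunE (hjoinC Hh).
split; first by move=> f g; apply/ffunP => e; rewrite !ffunE (hmeetKU Hh).
split; first by move=> f g; apply/ffunP => e; rewrite !ffunE (hjoinKI Hh).
split; first by move=> f; apply/ffunP => e; rewrite !ffunE (hmeetx1 Hh).
split; first by move=> f; apply/ffunP => e; rewrite !ffunE (hjoinx0 Hh).
by move=> f g h; apply/pleP/pleP => fgh e; move: (fgh e); rewrite !ffunE (hle_imp Hh).
Qed.

Lemma le_class_joins i e (F : E -> A) e' :
  sim i e' e -> F e' ≤ \big[hjoin o/⊥]_(e'' | sim i e'' e) F e''.
Proof. exact: hle_joins. Qed.
Lemma class_meets_le i e (F : E -> A) e' :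
  sim i e' e -> \big[hmeet o/⊤]_(e'' | sim i e'' e) F e'' ≤ F e'.
Proof. exact: hmeets_le. Qed.

Lemma pbox_imp i (f g : {ffun E -> A}) :
  hle po (hbox po i (himp po f g)) (himp po (hbox po i f) (hbox po i g)).
Proof.
apply/pleP => e; rewrite pimpE !pboxE (hle_imp Hh); apply: (hle_meets Hh) => e' e'e.
have := class_meets_le (fun e' => □ i (himp po f g e')) e'e; rewrite pimpE => fg_le.
apply: (hle_trans Hh) (hleI2 Hh fg_le (class_meets_le (fun e' => □ i (f e')) e'e)) _.
by rewrite -(hle_imp Hh); apply: hbox_imp.
Qed.

Lemma pbox_imp_dia i (f g : {ffun E -> A}) :
  hle po (hbox po i (himp po f g)) (himp po (hdia po i f) (hdia po i g)).
Proof.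
apply/pleP => e; rewrite pimpE (hle_imp Hh) (hmeetC Hh) pdiaE -(hle_imp Hh).
apply: (hjoins_le Hh) => e' e'e; rewrite (hle_imp Hh) (hmeetC Hh) -(hle_imp Hh).
have := class_meets_le (fun e' => □ i (himp po f g e')) e'e; rewrite pimpE pboxE => fg_le.
apply: (hle_trans Hh) fg_le _; apply: (hle_trans Hh) (hbox_imp_dia Hm i _ _) _.
by apply: (himp_mono Hh); rewrite pdiaE; apply: (le_class_joins (fun e' => ◇ i (g e'))).
Qed.

Lemma pops_monadic : is_monadic po.
Proof.
split=> [|i]; first exact: pops_heyting.
do 10?split; try by [apply: pbox_imp | apply: pbox_imp_dia].
- move=> f g /pleP fg; apply/pleP => e; rewrite !pdiaE; apply: (hjoins_le Hh) => e' e'e.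
  exact: (hle_trans Hh) (hdia_mono Hm i (fg e')) (le_class_joins _ e'e).
- move=> f g /pleP fg; apply/pleP => e; rewrite !pboxE; apply: (hle_meets Hh) => e' e'e.
  exact: (hle_trans Hh) (class_meets_le _ e'e) (hbox_mono Hm i (fg e')).
- move=> f; apply/pleP => e; rewrite pdiaE; apply: (hle_trans Hh) (hle_dia Hm i _) _.
  exact: (le_class_joins (fun e' => ◇ i (f e')) (sim_refl i e)).
- move=> f; apply/pleP => e; rewrite pboxE; apply: (hle_trans Hh) _ (hbox_le Hm i _).
  exact: (class_meets_le (fun e' => □ i (f e')) (sim_refl i e)).
- move=> f g; apply/pleP => e; rewrite pjoinE !pdiaE; apply: (hjoins_le Hh) => e' e'e.
  rewrite pjoinE; apply: (hle_trans Hh) (hdiaU_le Hm _ _ _) _.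
  by apply: (hleU2 Hh); apply: (le_class_joins (fun e' => ◇ i (_ e'))).
- move=> f; apply/pleP => e; rewrite (pboxE i _ e); apply: (hle_meets Hh) => e' e'e.
  by rewrite (pdia_class _ (sim_sym e'e)); apply/(hdia_fixed_le_box Hm)/pdia_fixed.
- move=> f; apply/pleP => e; rewrite (pdiaE i _ e); apply: (hjoins_le Hh) => e' e'e.
  rewrite (pbox_class _ e'e) pboxE; apply: (hle_meets Hh) => e'' e''e.
  by apply: (hle_trans Hh) (hdia_box_le Hm i (f e'')); apply/(hdia_mono Hm)/class_meets_le.
- apply/pleP => e; rewrite pdiaE pbotE; apply: (hjoins_le Hh) => e' _.
  by rewrite pbotE (hdia0 Hm); apply: hle_refl.
- apply/pleP => e; rewrite pboxE ptopE; apply: (hle_meets Hh) => e' _.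
  by rewrite ptopE (hbox1 Hm); apply: hle_refl.
Qed.

Lemma pops_epistemic : is_epistemic o -> is_epistemic po.
Proof.
move=> He; split=> [|i f]; first exact: pops_monadic.
apply/ffunP => e; rewrite pjoinE /hneg pimpE pbotE ptopE.
by have := He.2 i (hdia po i f e); rewrite pdia_fixed.
Qed.
End Product.

Section Quotient.
Variables (Ag : Type) (T : finType) (o : hops Ag T) (c : T).
Hypothesis Hm : is_monadic o.
Let Hh : is_heyting o := Hm.1.

Local Notation "x ⊓ y" := (hmeet o x y) (at level 40, left associativity).
Local Notation "x ⊔ y" := (hjoin o x y) (at level 45, left associativity).
Local Notation "x ≤ y" := (hle o x y) (at level 70).
Local Notation "⊥" := (hbot o).
Local Notation "⊤" := (htop o).
Local Notation "x ⇒ y" := (himp o x y) (at level 55, right associativity).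
Local Notation "◇" := (hdia o).
Local Notation q := (qops o c).
Local Notation Q := (qtype o c).

Lemma qrepK x : qrep o c x -> x ⊓ c = x.
Proof. by case/codomP=> y ->; rewrite -(hmeetA Hh) (hmeetxx Hh). Qed.
Lemma qrep_le x : qrep o c x -> x ≤ c. Proof. by move/qrepK/eqP. Qed.
Lemma qval_le (p : Q) : val p ≤ c. Proof. exact/qrep_le/valP. Qed.
Lemma qleE (p p' : Q) : hle q p p' = (val p ≤ val p').
Proof.
have pc := qval_le p; have p'c := qval_le p'.
by rewrite /hle -val_eqE /= (_ : val p ⊓ val p' ⊓ c = val p ⊓ val p') //; hlatE.
Qed.

Lemma qdiaE i (p : Q) : val (hdia q i p) = ◇ i (val p) ⊓ c.
Proof. by congr (◇ i _ ⊓ c); apply/qrepK/valP. Qed.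

Lemma qval0 : val (hbot q) = ⊥. Proof. by rewrite /=; hlatE. Qed.

Lemma qops_heyting : is_heyting q.
Proof.
do 8?split.
- by move=> x y z; apply: val_inj; move: (qval_le x) (qval_le y) (qval_le z) => /= *; hlatE.
- by move=> x y; apply: val_inj; move: (qval_le x) (qval_le y) => /= *; hlatE.
- by move=> x y z; apply: val_inj; move: (qval_le x) (qval_le y) (qval_le z) => /= *; hlatE.
- by move=> x y; apply: val_inj; move: (qval_le x) (qval_le y) => /= *; hlatE.
- by move=> x y; apply: val_inj; move: (qval_le x) (qval_le y) => /= *; hlatE.
- by move=> x y; apply: val_inj; move: (qval_le x) (qval_le y) => /= *; hlatE.
- by move=> x; apply: val_inj; move: (qval_le x) => /= *; hlatE.
- by move=> x; apply: val_inj; move: (qval_le x) => /= *; hlatE.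
move=> x y z; rewrite !qleE /=; have xc := qval_le x; have yc := qval_le y.
rewrite (_ : val x ⊓ val y ⊓ c = val x ⊓ val y); last by hlatE.
rewrite -(hle_imp Hh); apply/idP/idP => [? | x_yzc]; first by hlat.
exact: (hle_trans Hh) x_yzc (hleIl Hh _ _).
Qed.

Lemma qmeet_imp x y z : x ≤ y ⇒ z -> x ⊓ c ≤ (y ⊓ c ⇒ z ⊓ c) ⊓ c.
Proof.
move=> xyz; apply: (hlexI Hh) (hleIr Hh _ _); rewrite (hle_imp Hh).
apply: (hlexI Hh); last by hlat.
by apply: (hle_trans Hh) (hleI2 Hh (hleIl Hh _ _) (hleIl Hh _ _)) _; rewrite -(hle_imp Hh).
Qed.

Lemma qops_monadic : is_monadic q.
Proof.
split=> [|i]; first exact: qops_heyting.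
do 10?split.
- move=> [a pa] [b pb]; rewrite !qleE /= (qrepK pa) (qrepK pb) => ab.
  exact/(hleI2 Hh)/(hle_refl Hh)/(hdia_mono Hm).
- move=> p p'; rewrite !qleE /= => pp'.
  exact/(hleI2 Hh)/(hle_refl Hh)/(hbox_mono Hm)/(himp_mono Hh).
- move=> [a pa]; rewrite qleE /= (qrepK pa).
  exact: (hlexI Hh) (hle_dia Hm _ _) (qrep_le pa).
- move=> p; rewrite qleE /=; apply: (hle_mp Hh (y := c)); first exact: (hleIr Hh).
  exact/(hleIxl Hh)/(hbox_le Hm).
- move=> [a pa] [b pb]; rewrite qleE /= (qrepK pa) (qrepK pb).
  have ac := qrep_le pa; have bc := qrep_le pb.
  have abc : (a ⊔ b) ⊓ c = a ⊔ b by hlatE.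
  by rewrite !abc (hdiaU Hm) (hmeetC Hh) (hmeetUr Hh); hlat.
- move=> [a pa] [b pb]; rewrite qleE /=; apply: qmeet_imp.
  apply: (hle_trans Hh) (hbox_imp Hm _ _ _); apply: (hbox_mono Hm).
  exact: (hle_trans Hh) (himp_mono Hh _ (hleIl Hh _ _)) (himp_distr Hh _ _ _).
- move=> [a pa]; rewrite qleE /= (qrepK pa); apply: (hlexI Hh) (hleIr Hh _ _).
  apply: (hleIxl Hh); apply: (hle_trans Hh) (hdia_le_box Hm i _) _.
  by apply: (hbox_mono Hm); rewrite (hle_imp Hh); apply: hle_refl.
- move=> p; rewrite qleE /=; apply: (hleI2 Hh) (hle_refl Hh _).
  by apply: (hle_trans Hh) (hdia_box_le Hm i _); apply: (hdia_mono Hm); hlat.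
- move=> [a pa] [b pb]; rewrite qleE /= (qrepK pa) (qrepK pb); apply: qmeet_imp.
  apply: (hle_trans Hh) (hbox_imp_dia Hm _ _ _); apply: (hbox_mono Hm).
  apply: (hle_trans Hh) (himp_anti Hh _ (qrep_le pa)) _; rewrite (hle_imp Hh).
  apply: (hle_mp Hh (y := a)); first by hlat.
  by apply: (hle_trans Hh) (hleIl Hh _ c); apply: (hle_mp Hh (y := a)); hlat.
- have botc : ⊥ ⊓ c = ⊥ by hlatE.
  by rewrite qleE /= !botc (hdia0 Hm); hlat.
- rewrite qleE /=; apply: (hlexI Hh); last by hlat.
  have top_le : ⊤ ≤ c ⇒ ⊤ ⊓ c by rewrite (hle_imp Hh); hlat.
  by apply: (hle_trans Hh) (hbox_mono Hm i top_le); rewrite (hbox1 Hm); hlat.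
Qed.

Lemma qops_epistemic : is_epistemic o -> is_epistemic q.
Proof.
move=> He; split=> [|i p]; first exact: qops_monadic.
apply: val_inj => /=; rewrite (qrepK (valP p)).
set v := ◇ i (val p); have v_fixed : ◇ i v = v := hdia_id Hm _ _.
have v_compl : v ⊔ hneg o v = ⊤ by have := He.2 i v; rewrite v_fixed.
have botc : ⊥ ⊓ c = ⊥ by hlatE.
rewrite botc; apply: (hle_anti Hh); first by hlat.
apply: (hlexI Hh); last by hlat.
apply: (hle_trans Hh (y := c ⊓ (v ⊔ hneg o v))); first by rewrite v_compl; hlat.
rewrite (hmeetUr Hh); apply: (hleU2 Hh); first by hlat.
apply: (hlexI Hh); last by hlat.
exact/(hleIxr Hh)/(himp_anti Hh)/(hleIl Hh).
Qed.
End Quotient.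

Section ClassRestriction.
Variables (Ag : Type) (A : finType) (o : hops Ag A) (E : finType) (sim : Ag -> rel E).
Hypothesis sim_equiv : equivalence_family sim.
Hypothesis Hm : is_monadic o.
Let Hh : is_heyting o := Hm.1.
Variable c : {ffun E -> A}.

Local Notation "x ⊓ y" := (hmeet o x y) (at level 40, left associativity).
Local Notation "x ≤ y" := (hle o x y) (at level 70).
Local Notation "⊥" := (hbot o).
Local Notation "◇" := (hdia o).
Local Notation po := (pops o sim).
Local Notation q := (qops po c).
Local Notation Q := (qtype po c).

Let Hpm : is_monadic po := pops_monadic sim_equiv Hm.

Lemma qval_le_pt (p : Q) e : val p e ≤ c e.
Proof. by move/pleP: (qval_le Hpm p); apply. Qed.
Lemma qle_pt (p p' : Q) : hle q p p' -> forall e, val p e ≤ val p' e.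
Proof. by rewrite (qleE Hpm) => /pleP. Qed.

Definition class_restr i (m : A) (e0 : E) : {ffun E -> A} :=
  [ffun e => if sim i e e0 then m ⊓ c e else ⊥].

Section OneClass.
Variables (i : Ag) (m : A) (e0 : E).
Hypotheses (m_min : is_minimal o i m) (mc0 : m ⊓ c e0 != ⊥).
Local Notation r := (class_restr i m e0).

Lemma class_restrE e : r e = if sim i e e0 then m ⊓ c e else ⊥.
Proof. by rewrite ffunE. Qed.

Lemma qval_class_restr : val (qproj po c r) = r.
Proof. by apply/ffunP => e; rewrite pmeetE class_restrE; case: ifP => _; hlatE. Qed.

Lemma class_restr_fixed : hdia q i (qproj po c r) = qproj po c r.
Proof.
apply: val_inj; rewrite (qdiaE Hpm) qval_class_restr; apply/ffunP => e.
rewrite pmeetE pdiaE class_restrE.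
case: ifP => ee0; last first.
  apply: (hlex0 Hh); apply: (hleIxl Hh); apply: (hjoins_le Hh) => e' e'e.
  rewrite class_restrE; case: ifP => e'e0; last by rewrite (hdia0 Hm); hlat.
  by move: ee0; rewrite (sim_trans sim_equiv (sim_sym sim_equiv e'e) e'e0).
congr (_ ⊓ _); apply: (hle_anti Hh).
  apply: (hjoins_le Hh) => e' e'e; rewrite class_restrE (sim_trans sim_equiv e'e ee0).
  by rewrite -{2}(minimal_fixed m_min); apply: (hdia_mono Hm); hlat.
apply: (hle_trans Hh) (le_class_joins Hm (fun e' => ◇ i (r e')) (sim_sym sim_equiv ee0)).
by rewrite class_restrE (sim_refl sim_equiv) (minimal_diaI Hm m_min mc0); apply: hle_refl.
Qed.

Lemma class_restr_neq0 : qproj po c r != hbot q.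
Proof.
apply: contraNneq mc0 => /(congr1 (fun p : Q => val p e0)).
by rewrite qval_class_restr class_restrE (sim_refl sim_equiv) (qval0 _ Hpm) pbotE => ->.
Qed.
End OneClass.

Lemma qminimal_class_restr i (F : Q) : is_minimal q i F ->
  exists m e0, is_minimal o i m /\ val F = class_restr i m e0.
Proof.
move=> F_min; case: (pickP (fun e => val F e != ⊥)) => [e0 Fe0 | F0]; last first.
  case/negP: (minimal_neq0 F_min); apply/eqP/val_inj; rewrite (qval0 _ Hpm).
  by apply/ffunP => e; rewrite pbotE; move/negbFE/eqP: (F0 e).
have [m m_min mF0] := minimal_meet_exists Hm i Fe0.
have mc0 : m ⊓ c e0 != ⊥.
  apply: contraNneq mF0 => mc0; apply/eqP/(hlex0 Hh); rewrite -mc0.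
  exact/(hleI2 Hh)/qval_le_pt/(hle_refl Hh).
exists m, e0; split=> //; rewrite -(qval_class_restr i m e0).
congr val; apply/esym/(minimal_eq F_min); last 1 first.
- exact: class_restr_neq0.
- rewrite (qleE Hpm) qval_class_restr; apply/pleP => e; rewrite class_restrE.
  case: ifP => ee0; last exact: hle0x.
  rewrite -{1}(minimal_fixed F_min) (qdiaE Hpm) pmeetE pdiaE.
  apply: (hleI2 Hh) (hle_refl Hh _); apply: (hle_trans Hh) (minimal_le_dia Hm m_min mF0) _.
  exact: (le_class_joins Hm (fun e' => ◇ i (val F e')) (sim_sym sim_equiv ee0)).
- exact: class_restr_fixed.
Qed.
End ClassRestriction.

Section Measure.
Variables (Ag : Type) (R : realType) (T : finType) (o : hops Ag T).
Hypothesis Hh : is_heyting o.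
Variables (i : Ag) (nu : T -> R) (m : T).
Hypotheses (nu_meas : is_measure o i nu) (m_min : is_minimal o i m).

Local Notation "x ⊓ y" := (hmeet o x y) (at level 40, left associativity).
Local Notation "x ⊔ y" := (hjoin o x y) (at level 45, left associativity).
Local Notation "x ≤ y" := (hle o x y) (at level 70).
Local Notation "⊥" := (hbot o).

Let in_dom_le x : x ≤ m -> in_dom o i x.
Proof. by move=> xm; apply/existsP; exists m; rewrite m_min. Qed.

Lemma measure0 : nu ⊥ = 0.
Proof. by case: nu_meas => -[_ [_ [_ ->]]] //; exists m; apply/in_dom_le/hle_refl. Qed.
Lemma measure_mono x y : x ≤ y -> y ≤ m -> nu x <= nu y.
Proof.
move=> xy ym; case: nu_meas => -[_ [mono _]] _.
exact: mono (in_dom_le (hle_trans Hh xy ym)) (in_dom_le ym) xy.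
Qed.
Lemma measureU x y : x ≤ m -> y ≤ m -> nu (x ⊔ y) = nu x + nu y - nu (x ⊓ y).
Proof. by move=> xm ym; case: nu_meas => -[_ [_ [modular _]]] _; exact: modular m_min xm ym. Qed.
Lemma measure_lt x y : x ≤ y -> x != y -> y ≤ m -> nu x < nu y.
Proof.
by move=> xy x'y; case: nu_meas => _ [strict _]; apply: strict m_min _; rewrite /hlt xy.
Qed.

Lemma measureI_modular l x y : x ≤ m -> y ≤ m ->
  nu ((x ⊔ y) ⊓ l) + nu ((x ⊓ y) ⊓ l) = nu (x ⊓ l) + nu (y ⊓ l).
Proof.
move=> xm ym; rewrite (hmeetC Hh) (hmeetUr Hh) measureU; try by hlat.
rewrite (_ : x ⊓ y ⊓ l = l ⊓ x ⊓ (l ⊓ y)); last by hlatE.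
by rewrite (hmeetC Hh l x) (hmeetC Hh l y); lra.
Qed.

Lemma measureI_diff_mono l d x y : d ≤ l -> x ≤ y -> y ≤ m ->
  nu (x ⊓ l) - nu (x ⊓ d) <= nu (y ⊓ l) - nu (y ⊓ d).
Proof.
move=> dl xy ym; have xm : x ≤ m by apply: hle_trans xy ym.
have := measureU (x := x ⊓ l) (y := y ⊓ d).
rewrite (_ : x ⊓ l ⊓ (y ⊓ d) = x ⊓ d); last by hlatE.
have : nu (x ⊓ l ⊔ y ⊓ d) <= nu (y ⊓ l) by apply: measure_mono; hlat.
have xlm : x ⊓ l ≤ m by hlat.
have ydm : y ⊓ d ≤ m by hlat.
move=> + /(_ xlm ydm); lra.
Qed.

Lemma measureI_joins (I : eqType) (s : seq I) (F : I -> T) x : x ≤ m -> uniq s ->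
  {in s &, forall b b', b != b' -> F b ⊓ F b' = ⊥} ->
  nu (x ⊓ \big[hjoin o/⊥]_(b <- s) F b) = \sum_(b <- s) nu (x ⊓ F b).
Proof.
move=> xm; elim: s => [|b s IH] /=.
  by rewrite !big_nil (_ : x ⊓ ⊥ = ⊥) ?measure0 //; hlatE.
case/andP=> b's s_uniq disj; rewrite !big_cons -IH //; last first.
  by move=> b1 b2 b1s b2s; apply: disj; rewrite inE ?b1s ?b2s orbT.
set J := \big[hjoin o/⊥]_(j <- s) F j.
have bJ : F b ⊓ J = ⊥.
  apply: (hlex0 Hh); rewrite (hmeetC Hh) -(hle_imp Hh).
  apply: (hjoins_le_seq Hh) => b' b's'; rewrite (hle_imp Hh) disj ?inE ?eqxx ?b's' ?orbT //.
    exact: hle_refl.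
  by apply: contraNneq b's => <-.
rewrite (hmeetUr Hh) measureU; try by hlat.
rewrite (_ : x ⊓ F b ⊓ (x ⊓ J) = ⊥) ?measure0 ?subr0 //.
by apply: (hlex0 Hh); rewrite -bJ; hlat.
Qed.
End Measure.

Section Update.
Variables (Ag : Type) (R : realType) (A : finType) (o : hops Ag A)
  (mu : Ag -> A -> R) (E : finType) (sim : Ag -> rel E) (P : Ag -> E -> R)
  (phi : seq A) (pre : 'I_(size phi) -> E -> R).
Hypotheses (HA : is_APE o mu) (HE : is_pes o sim P pre).

Let Hm : is_monadic o := HA.1.1.
Let Hh : is_heyting o := Hm.1.
Let sim_equiv : equivalence_family sim := HE.2.1.

Local Notation "x ⊓ y" := (hmeet o x y) (at level 40, left associativity).
Local Notation "x ⊔ y" := (hjoin o x y) (at level 45, left associativity).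
Local Notation "x ≤ y" := (hle o x y) (at level 70).
Local Notation "⊥" := (hbot o).
Local Notation I := 'I_(size phi).
Local Notation lab := (lab o).
Local Notation mb := (mb o).
Local Notation c := (prebar o pre).
Local Notation po := (pops o sim).

Lemma P_gt0 i e : 0 < P i e. Proof. by case/andP: (HE.2.2.1 i e). Qed.
Lemma pre_ge0 (a : I) e : 0 <= pre a e. Proof. exact: HE.2.2.2.2.2.1. Qed.
Lemma pre_down (a b : I) e : pre a e = 0 -> phi_lt o a b -> pre b e = 0.
Proof. exact: HE.2.2.2.2.2.2.2. Qed.

Lemma phi_lt_le (a b : I) : phi_lt o a b -> lab a ≤ lab b.
Proof. by case/orP=> [/and3P[_ ab _] // | /andP[/eqP -> _]]; apply: hle_refl. Qed.
Lemma phi_lt_irr : irreflexive (phi_lt o (phi := phi)).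
Proof. by move=> a; rewrite /phi_lt eqxx ltnn. Qed.
Lemma phi_lt_trans : transitive (phi_lt o (phi := phi)).
Proof.
move=> b a d ab bd; have lab_ab := phi_lt_le ab; have lab_bd := phi_lt_le bd.
rewrite /phi_lt; case: (eqVneq (lab a) (lab d)) => [ad | a'd] /=.
  have lab_ab' : lab a = lab b by apply: (hle_anti Hh lab_ab); rewrite ad.
  move: ab bd; rewrite /phi_lt -lab_ab' ad eqxx /=; exact: ltn_trans.
by rewrite /hlt a'd andbT orbF; apply: hle_trans lab_ab lab_bd.
Qed.

Lemma mb_lt (a b : I) : b \in mb a -> phi_lt o b a.
Proof. by rewrite inE => /andP[]. Qed.
Lemma mb_maximal (a b d : I) : b \in mb a -> phi_lt o b d -> ~~ phi_lt o d a.
Proof. by rewrite inE => /andP[_ /forallP/(_ d)]; rewrite negb_and => /orP[/negP|]. Qed.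

Lemma mb_disjoint (a b b' : I) : b \in mb a -> b' \in mb a -> b != b' ->
  lab b ⊓ lab b' = ⊥.
Proof.
wlog lt_or_disj : b b' / phi_lt o b b' \/ lab b ⊓ lab b' = ⊥.
  move=> hyp ba b'a bb'; case: (eqVneq (lab b) (lab b')) => [eq_lab | neq_lab].
    case: (ltngtP b b') => [lt_bb' | lt_b'b | /val_inj eq_bb'].
    - by apply: hyp => //; left; rewrite /phi_lt eq_lab eqxx lt_bb' orbT.
    - rewrite (hmeetC Hh); apply: hyp => //; last by rewrite eq_sym.
      by left; rewrite /phi_lt eq_lab eqxx lt_b'b orbT.
    - by rewrite eq_bb' eqxx in bb'.
  case: (HE.2.2.2.2.1 b b' neq_lab) => [|[lt_bb' | lt_b'b]]; first by [].
  - by apply: hyp => //; left; rewrite /phi_lt neq_lab lt_bb'.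
  - rewrite (hmeetC Hh); apply: hyp => //; last by rewrite eq_sym.
    by left; rewrite /phi_lt eq_sym neq_lab lt_b'b.
by case: lt_or_disj => // lt_bb' ba /mb_lt; rewrite (negbTE (mb_maximal ba lt_bb')).
Qed.

Definition mb_join (a : I) : A := \big[hjoin o/⊥]_(b <- enum (mb a)) lab b.

Lemma mb_join_le (a : I) : mb_join a ≤ lab a.
Proof. by apply: (hjoins_le_seq Hh) => b; rewrite mem_enum => /mb_lt/phi_lt_le. Qed.

Definition mu_event i e x : R := \sum_(a < size phi) mu_at o mu i a x * pre a e.

Lemma pmuE i (f : {ffun E -> A}) :
  pmu o P pre mu i f = \sum_e P i e * mu_event i e (f e).
Proof.
by apply: eq_bigr => e _; rewrite /mu_event mulr_sumr; apply: eq_bigr => a _; rewrite mulrA.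
Qed.

Section Agent.
Variables (i : Ag) (m : A).
Hypothesis m_min : is_minimal o i m.
Let mu_meas : is_measure o i (mu i) := HA.2 i.

Lemma mu_atE (a : I) x : x ≤ m -> mu_at o mu i a x = mu i (x ⊓ lab a) - mu i (x ⊓ mb_join a).
Proof.
move=> xm; rewrite /mu_at /mb_join -big_enum (measureI_joins Hh mu_meas m_min) //.
  exact: enum_uniq.
by move=> b b'; rewrite !mem_enum; apply: mb_disjoint.
Qed.

Lemma mu_at_mono (a : I) x y : x ≤ y -> y ≤ m -> mu_at o mu i a x <= mu_at o mu i a y.
Proof.
move=> xy ym; rewrite !mu_atE //; last exact: hle_trans xy ym.
exact: (measureI_diff_mono Hh mu_meas m_min) (mb_join_le a) xy ym.
Qed.

Lemma mu_at_modular (a : I) x y : x ≤ m -> y ≤ m ->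
  mu_at o mu i a (x ⊔ y) + mu_at o mu i a (x ⊓ y) = mu_at o mu i a x + mu_at o mu i a y.
Proof.
move=> xm ym; rewrite !mu_atE //; try by hlat.
have := measureI_modular Hh mu_meas m_min (lab a) xm ym.
have := measureI_modular Hh mu_meas m_min (mb_join a) xm ym.
lra.
Qed.

Lemma mu_at0 (a : I) : mu_at o mu i a ⊥ = 0.
Proof.
have botI x : ⊥ ⊓ x = ⊥ by hlatE.
by rewrite mu_atE ?hle0x // !botI (measure0 Hh mu_meas m_min) subrr.
Qed.

Lemma mu_at_lt (a : I) x y : x ≤ y -> y ≤ m -> x ⊓ lab a != y ⊓ lab a ->
  {in mb a, forall b, x ⊓ lab b = y ⊓ lab b} -> mu_at o mu i a x < mu_at o mu i a y.
Proof.
move=> xy ym xya_neq agree; rewrite /mu_at.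
rewrite (eq_bigr (fun b => mu i (y ⊓ lab b))) => [|b /agree -> //].
by rewrite ltrBlDr subrK; apply: (measure_lt mu_meas m_min _ xya_neq); hlat.
Qed.

Lemma mu_event_mono e x y : x ≤ y -> y ≤ m -> mu_event i e x <= mu_event i e y.
Proof. by move=> xy ym; apply: ler_sum => a _; apply/ler_wpM2r/mu_at_mono/ym/xy/pre_ge0. Qed.

Lemma mu_event_modular e x y : x ≤ m -> y ≤ m ->
  mu_event i e (x ⊔ y) + mu_event i e (x ⊓ y) = mu_event i e x + mu_event i e y.
Proof.
move=> xm ym; rewrite /mu_event -!big_split; apply: eq_bigr => a _ /=.
by rewrite -!mulrDl mu_at_modular.
Qed.

Lemma mu_event0 e : mu_event i e ⊥ = 0.
Proof. by rewrite /mu_event big1 // => a _; rewrite mu_at0 mul0r. Qed.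

Lemma mu_event_ge0 e x : x ≤ m -> 0 <= mu_event i e x.
Proof. by move=> xm; rewrite -(mu_event0 e); apply: mu_event_mono xm; apply: hle0x. Qed.

Lemma mu_event_lt e x y : x ≤ y -> x != y -> y ≤ m -> y ≤ c e ->
  mu_event i e x < mu_event i e y.
Proof.
move=> xy x'y ym yc; pose S a := (pre a e != 0) && (x ⊓ lab a != y ⊓ lab a).
have [a1 Sa1] : exists a, S a.
  apply/existsP; apply: contraNT x'y => /existsPn noS; apply/eqP/(hle_anti Hh xy).
  rewrite -(hmeet_idPl yc) ffunE; apply: (hle_trans Hh) (hmeet_joins Hh _ _ _) _.
  apply: (hjoins_le Hh) => a prea; move: (noS a); rewrite /S prea negbK => /eqP <-.
  exact: hleIl.
have [a0 /andP[prea0 xya0] a0_min] := exists_lt_minimal phi_lt_irr phi_lt_trans Sa1.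
have agree : {in mb a0, forall b, x ⊓ lab b = y ⊓ lab b}.
  move=> b /mb_lt ba0; apply/eqP; move: (a0_min b ba0); rewrite /S negb_and !negbK.
  by case/orP=> [/eqP/pre_down/(_ ba0)/eqP | //]; rewrite (negbTE prea0).
rewrite /mu_event (bigD1 a0) //= [X in _ < X](bigD1 a0) //=; apply: ltr_leD.
  by rewrite ltr_pM2r ?mu_at_lt // lt0r prea0 pre_ge0.
by apply: ler_sum => a _; apply/ler_wpM2r/mu_at_mono/ym/xy/pre_ge0.
Qed.

Local Notation pm := (pmu o P pre mu i).

Lemma pmu_mono (f g : {ffun E -> A}) :
  (forall e, f e ≤ g e) -> (forall e, g e ≤ m) -> pm f <= pm g.
Proof.
move=> fg gm; rewrite !pmuE; apply: ler_sum => e _.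
exact/ler_wpM2l/mu_event_mono/gm/fg/ltW/P_gt0.
Qed.

Lemma pmu_lt (f g : {ffun E -> A}) : (forall e, f e ≤ g e) -> (forall e, g e ≤ m) ->
  (forall e, g e ≤ c e) -> f != g -> pm f < pm g.
Proof.
move=> fg gm gc f'g; have [e f'ge] : exists e, f e != g e.
  apply/existsP; apply: contraNT f'g => /existsPn fg_eq.
  by apply/eqP/ffunP => e; apply/eqP/negbNE/fg_eq.
rewrite !pmuE (bigD1 e) //= [X in _ < X](bigD1 e) //=; apply: ltr_leD.
  by rewrite ltr_pM2l ?P_gt0 // mu_event_lt.
by apply: ler_sum => e' _; apply/ler_wpM2l/mu_event_mono/gm/fg/ltW/P_gt0.
Qed.

Lemma pmu0 : pm (hbot po) = 0.
Proof. by rewrite pmuE big1 // => e _; rewrite pbotE mu_event0 mulr0. Qed.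

Lemma pmu_ge0 (f : {ffun E -> A}) : (forall e, f e ≤ m) -> 0 <= pm f.
Proof.
move=> fm; rewrite pmuE; apply: sumr_ge0 => e _.
exact: mulr_ge0 (ltW (P_gt0 _ _)) (mu_event_ge0 _ (fm e)).
Qed.

Lemma pmu_modular (f g : {ffun E -> A}) : (forall e, f e ≤ m) -> (forall e, g e ≤ m) ->
  pm (hjoin po f g) + pm (hmeet po f g) = pm f + pm g.
Proof.
move=> fm gm; rewrite !pmuE -!big_split; apply: eq_bigr => e _.
by rewrite pjoinE pmeetE /= -!mulrDr mu_event_modular.
Qed.
End Agent.

Local Notation q := (qops po c).
Local Notation Q := (qtype po c).
Let Hpm : is_monadic po := pops_monadic sim_equiv Hm.
Let Hqh : is_heyting q := (qops_monadic c Hpm).1.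

Section UpdatedAgent.
Variable i : Ag.
Local Notation pm := (pmu o P pre mu i).
Local Notation um := (@upd_mu Ag R A o E sim P phi pre mu i).

Lemma qminimal_le_minimal (F : Q) : is_minimal q i F ->
  exists2 m, is_minimal o i m & forall (p : Q) e, hle q p F -> val p e ≤ m.
Proof.
case/(qminimal_class_restr sim_equiv Hm) => m [e0 [m_min F_restr]].
exists m => // p e /(qle_pt sim_equiv Hm)/(_ e) pF; apply: (hle_trans Hh) pF _.
by rewrite F_restr class_restrE; case: ifP => _; hlat.
Qed.

Lemma upd_muE (F p : Q) : is_minimal q i F -> hle q p F -> um p = pm (val p) / pm (val F).
Proof.
move=> F_min pF; rewrite /upd_mu /qmu; case: eqP => [p0 | /eqP p'0].
  have [m m_min _] := qminimal_le_minimal F_min.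
  by rewrite p0 (qval0 _ Hpm) (pmu0 m_min) mul0r.
case: pickP => [F' /andP[F'_min pF'] | no_min]; last by move: (no_min F); rewrite F_min pF.
by rewrite (minimal_unique (qops_monadic c Hpm) F'_min F_min p'0 pF' pF).
Qed.

Lemma pmu_qminimal_gt0 (F : Q) : is_minimal q i F -> 0 < pm (val F).
Proof.
move=> F_min; have [m m_min Fm] := qminimal_le_minimal F_min.
rewrite -(pmu0 m_min) -(qval0 c Hpm); apply: (pmu_lt m_min).
- exact/(qle_pt sim_equiv Hm)/(hle0x Hqh).
- by move=> e; apply: Fm; apply: hle_refl.
- exact: qval_le_pt.
- by rewrite val_eqE eq_sym (minimal_neq0 F_min).
Qed.

Lemma upd_mu_ge0 (p : Q) : in_dom q i p -> 0 <= um p.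
Proof.
case/existsP=> F /andP[F_min pF]; rewrite (upd_muE F_min pF).
have [m m_min Fm] := qminimal_le_minimal F_min.
rewrite divr_ge0 ?(ltW (pmu_qminimal_gt0 F_min)) //.
by apply: (pmu_ge0 m_min) => e; apply: Fm pF.
Qed.

Lemma upd_mu_mono (p p' : Q) : in_dom q i p' -> hle q p p' -> um p <= um p'.
Proof.
case/existsP=> F /andP[F_min p'F] pp'; have pF := hle_trans Hqh pp' p'F.
rewrite (upd_muE F_min pF) (upd_muE F_min p'F) ler_pM2r ?invr_gt0 ?pmu_qminimal_gt0 //.
have [m m_min Fm] := qminimal_le_minimal F_min.
by apply: (pmu_mono m_min (qle_pt sim_equiv Hm pp')) => e; apply: Fm p'F.
Qed.

Lemma upd_mu_modular (F p p' : Q) : is_minimal q i F -> hle q p F -> hle q p' F ->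
  um (hjoin q p p') = um p + um p' - um (hmeet q p p').
Proof.
move=> F_min pF p'F; have [m m_min Fm] := qminimal_le_minimal F_min.
have pUF : hle q (hjoin q p p') F by apply: (hleUx Hqh).
have pIF : hle q (hmeet q p p') F by apply: (hleIxl Hqh).
rewrite (upd_muE F_min pUF) (upd_muE F_min pIF) (upd_muE F_min pF) (upd_muE F_min p'F).
have valU : val (hjoin q p p') = hjoin po (val p) (val p').
  by apply/hmeet_idPl/(hleUx Hpm.1); apply: qval_le.
have valI : val (hmeet q p p') = hmeet po (val p) (val p').
  by apply/hmeet_idPl/(hleIxl Hpm.1); apply: qval_le.
have := pmu_modular m_min (fun e => Fm p e pF) (fun e => Fm p' e p'F).
by rewrite -valU -valI -mulrDl -mulrBl => <-; rewrite addrK.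
Qed.

Lemma upd_mu_lt (F p p' : Q) : is_minimal q i F -> hlt q p p' -> hle q p' F -> um p < um p'.
Proof.
move=> F_min /andP[pp' p'p'] p'F; have pF := hle_trans Hqh pp' p'F.
rewrite (upd_muE F_min pF) (upd_muE F_min p'F) ltr_pM2r ?invr_gt0 ?pmu_qminimal_gt0 //.
have [m m_min Fm] := qminimal_le_minimal F_min.
apply: (pmu_lt m_min (qle_pt sim_equiv Hm pp')) => [e | e |]; first exact: Fm p'F.
  exact: qval_le_pt.
by rewrite val_eqE.
Qed.

Lemma upd_mu_minimal (F : Q) : is_minimal q i F -> um F = 1.
Proof.
move=> F_min; rewrite (upd_muE F_min (hle_refl Hqh F)) divff //.
exact/lt0r_neq0/pmu_qminimal_gt0.
Qed.

Lemma upd_mu_measure : is_measure q i um.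
Proof.
repeat split; [exact: upd_mu_ge0 | by move=> p p' _; apply: upd_mu_mono |
  exact: upd_mu_modular | by rewrite /upd_mu /qmu eqxx | exact: upd_mu_lt |
  exact: upd_mu_minimal].
Qed.
End UpdatedAgent.
End Update.

Theorem proposition10 (Ag : Type) (R : realType) (A : finType) (o : hops Ag A)
  (mu : Ag -> A -> R) (E : finType) (sim : Ag -> rel E) (P : Ag -> E -> R)
  (phi : seq A) (pre : 'I_(size phi) -> E -> R) :
  is_APE o mu ->
  is_pes o sim P pre ->
  is_APE (upd_ops o sim pre) (@upd_mu Ag R A o E sim P phi pre mu).
Proof.
move=> HA HE; have [[Hm _] _] := HA; have sim_equiv : equivalence_family sim := HE.2.1.
split=> [|i]; last exact: upd_mu_measure.
exact/(qops_epistemic _ (pops_monadic sim_equiv Hm))/(pops_epistemic sim_equiv Hm)/HA.1.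
Qed.
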